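(* The lattice $L=-A_1+A_2+2E_8$ is achiral, i.e., for some cell $P$ of $\Lambda(L)$ there is an automorphism $g$ of $L$ with $g(P)=P$ which is $P$-reversing and $\mathbb{Z}/3$-direct.
   Context: $-A_1$ is the rank one lattice generated by a vector of square $-2$; $A_2$, $E_8$ are positive definite root lattices; $+$ denotes orthogonal sum. For $L$: $V_k=\{v\in L:v^2=k,\ 2vw/v^2\in\mathbb{Z}\ \forall w\in L\}$ ($k=2,6$); $\Lambda(L)=\{x\in L\otimes\mathbb{R}: x^2<0\}/\mathbb{R}^*$; cells are closures of components of the complement in $\Lambda(L)$ of the hyperplanes $v^\perp$, $v\in V_2\cup V_6$. A cell $P$ lifts to two opposite pieces $\pm P^\sharp$ in $\{x^2<0\}/\mathbb{R}_{>0}$; $g$ with $g(P)=P$ is $P$-reversing if $g(P^\sharp)=-P^\sharp$. $g$ is $\mathbb{Z}/3$-direct if it acts trivially on the $3$-primary part (here $\mathbb{Z}/3$) of the discriminant group $L^*/L$. *)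

From HB Require Import structures.
From mathcomp Require Import all_boot all_order all_algebra.
From mathcomp Require Import all_classical all_reals all_analysis.
Set Implicit Arguments. Unset Strict Implicit. Unset Printing Implicit Defensive.
Import Order.TTheory GRing.Theory Num.Theory.
Import numFieldNormedType.Exports.
Local Open Scope classical_set_scope.
Local Open Scope ring_scope.

Definition rk : nat := 19.

(* E_8 Cartan (Gram) matrix, Bourbaki numbering (0-based):
   edges 1-3, 3-4, 4-5, 5-6, 6-7, 7-8, 2-4 *)
Definition e8_edge (a b : nat) : bool :=
  ((a, b) \in [:: (0, 2); (2, 3); (3, 4); (4, 5); (5, 6); (6, 7); (1, 3)]%N) ||
  ((b, a) \in [:: (0, 2); (2, 3); (3, 4); (4, 5); (5, 6); (6, 7); (1, 3)]%N).

Definition e8 (a b : nat) : int :=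
  if a == b then 2 else if e8_edge a b then -1 else 0.

(* Gram matrix entries of L in the basis: index 0 = -A_1, 1..2 = A_2,
   3..10 = first E_8, 11..18 = second E_8 *)
Definition gramL_entry (i j : nat) : int :=
  if (i == 0%N) && (j == 0%N) then -2
  else if [&& (1 <= i <= 2)%N & (1 <= j <= 2)%N] then (if i == j then 2 else -1)
  else if [&& (3 <= i <= 10)%N & (3 <= j <= 10)%N] then e8 (i - 3) (j - 3)
  else if [&& (11 <= i <= 18)%N & (11 <= j <= 18)%N] then e8 (i - 11) (j - 11)
  else 0.

Definition gramL : 'M[int]_rk := \matrix_(i, j) gramL_entry i j.

Definition bL (v w : 'rV[int]_rk) : int := (v *m gramL *m w^T) 0 0.

Definition V_k (k : int) (v : 'rV[int]_rk) : Prop :=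
  bL v v = k /\ forall w : 'rV[int]_rk, (k %| 2 * bL v w)%Z.

Definition Vroots (v : 'rV[int]_rk) : Prop := V_k 2 v \/ V_k 6 v.

(* Automorphisms of L: invertible integral matrices (acting on row vectors
   x |-> x *m g) preserving the form *)
Definition isAutL (g : 'M[int]_rk) : Prop :=
  g \in unitmx /\ g *m gramL *m g^T = gramL.

Section Real.
Variable R : realType.

Definition gramR : 'M[R]_rk := map_mx (fun z : int => z%:~R) gramL.
Definition bR (x y : 'rV[R]_rk) : R := (x *m gramR *m y^T) 0 0.
Definition intvR (v : 'rV[int]_rk) : 'rV[R]_rk := map_mx (fun z : int => z%:~R) v.

(* the (double) negative cone {x : x^2 < 0}; Lambda(L) is its quotient by R^* *)
Definition negcone : set 'rV[R]_rk := [set x | bR x x < 0].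

Definition mirrors : set 'rV[R]_rk :=
  [set x | exists v, Vroots v /\ bR (intvR v) x = 0].

Definition open_cells_lift : set 'rV[R]_rk := negcone `\` mirrors.

(* Lift P^# of a cell P: closure (relative to the negative cone) of a
   connected component of the complement of the mirrors in the negative cone.
   Such components are invariant under positive scaling, so P^# is a
   subset of {x^2<0} representing a subset of {x^2<0}/R_{>0}; the cell
   P = image of P^# in Lambda(L) corresponds to the R^*-invariant set
   P^# u -P^#. *)
Definition cell_lift (x0 : 'rV[R]_rk) : set 'rV[R]_rk :=
  closure (connected_component open_cells_lift x0) `&` negcone.

Definition cell_full (x0 : 'rV[R]_rk) : set 'rV[R]_rk :=
  cell_lift x0 `|` [set - x | x in cell_lift x0].

Definition actR (g : 'M[int]_rk) (x : 'rV[R]_rk) : 'rV[R]_rk :=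
  x *m map_mx (fun z : int => z%:~R) g.

End Real.

Definition ratv (v : 'rV[int]_rk) : 'rV[rat]_rk := map_mx (fun z : int => z%:~R) v.
Definition gramQ : 'M[rat]_rk := map_mx (fun z : int => z%:~R) gramL.
Definition integral_vec (x : 'rV[rat]_rk) : Prop := forall i, x 0 i \is a Num.int.
Definition inL (x : 'rV[rat]_rk) : Prop := integral_vec x.
Definition inLdual (x : 'rV[rat]_rk) : Prop := integral_vec (x *m gramQ^T).

(* g is Z/3-direct: acts trivially on the 3-primary part of L^*/L *)
Definition Z3_direct (g : 'M[int]_rk) : Prop :=
  forall x : 'rV[rat]_rk, inLdual x -> (exists k : nat, inL ((3 ^ k)%:R *: x)) ->
    inL (x *m map_mx (fun z : int => z%:~R) g - x).

From HB Require Import structures.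
From mathcomp Require Import all_boot all_order all_algebra.
From mathcomp Require Import all_classical all_reals all_analysis.
From mathcomp Require Import ring lra zify.
Import Order.TTheory GRing.Theory Num.Theory.
Import numFieldNormedType.Exports.
Local Open Scope classical_set_scope.
Local Open Scope ring_scope.

(* The automorphism is g = -h, where h is an involution of L exchanging two orthogonal
   copies of E6 and fixing their orthogonal complement, which is spanned rationally by a
   vector y with y^2 = -2 and a third copy of E6.  Let w_k run over the sums s_k of
   corresponding simple roots of the exchanged copies and the simple roots t_k of the
   third copy.  The point x0 = y + sum_k 10^-k w_k is fixed by h, so g maps the cell
   through x0 onto its opposite.  It is negative since y^2 = -2 while the (w_k, w_l) are
   small, and it lies on no mirror: for v with v^2 in {2, 6}, the orthogonal decomposition
   of v^2 bounds each integer (v, w_k) by max (4, 6 |(v, y)|), so the decimal expansion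
   (v, x0) = (v, y) + sum_k 10^-k (v, w_k) vanishes only if all its digits do, and then v
   lies in the anti-diagonal copy of E6(2), whose norms are divisible by 4.  Finally
   g - 1 maps x in L^* into L as soon as the -A_1 coordinate of x, which lies in 1/2 Z,
   is integral; this is the case on the 3-primary part of L^*/L. *)

Section ContinuousInvolution.
Context {T : topologicalType}.
Variable f : T -> T.
Hypotheses (f_cont : continuous f) (fK : involutive f).

Lemma image_involutive (A : set T) : f @` (f @` A) = A.
Proof.
apply/seteqP; split => [_ [_ [a Aa <-] <-]|a Aa]; first by rewrite fK.
by exists (f a); [exists a | rewrite fK].
Qed.

Lemma image_closure_involutive (S : set T) : f @` closure S = closure (f @` S).
Proof.
have sub (A : set T) : f @` closure A `<=` closure (f @` A).
  have : closure A `<=` f @^-1` closure (f @` A).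
    have /closure_id -> : closed (f @^-1` closure (f @` A)).
      by apply: closed_comp => //; exact: closed_closure.
    by apply: closureS => a Aa; apply: subset_closure; exists a.
  by move=> fA _ [a /fA ? <-].
apply/seteqP; split; first exact: sub.
move=> z fSz; exists (f z); last exact: fK.
by have := sub (f @` S) (f z) (ex_intro2 _ _ z fSz erefl); rewrite image_involutive.
Qed.

Lemma image_connected_component_involutive (A : set T) x :
  (forall z, A z -> A (f z)) ->
  f @` connected_component A x = connected_component A (f x).
Proof.
move=> fA.
have sub y : f @` connected_component A y `<=` connected_component A (f y).
  have [Ay|nAy] := pselect (A y); last first.
    by rewrite connected_component_out // image_set0.
  apply: connected_component_max.
  - by exists y => //; exact: connected_component_refl.
  - by move=> _ [z /connected_component_sub Az <-]; exact: fA.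
  - apply: connected_continuous_connected; first exact: component_connected.
    exact: continuous_subspaceT.
apply/seteqP; split; first exact: sub.
move=> z hz; exists (f z); last exact: fK.
by have := sub (f x) (f z) (ex_intro2 _ _ z hz erefl); rewrite fK.
Qed.

End ContinuousInvolution.

Section Decimal.
Variable R : realType.

Definition decimal (l : seq int) : R := foldr (fun x acc => (x%:~R + acc) / 10) 0 l.

Lemma decimal_norm_le (B : int) l : 0 <= B -> (forall x, x \in l -> `|x| <= B) ->
  `|decimal l| <= B%:~R / 9.
Proof.
move=> B0; elim: l => [|x l IH] lB /=; first by rewrite normr0 divr_ge0 // ler0z.
have xB : `|x%:~R : R| <= B%:~R by rewrite -intr_norm ler_int lB // mem_head.
have lB' : `|decimal l| <= B%:~R / 9.
  by apply: IH => z zl; apply: lB; rewrite in_cons zl orbT.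
rewrite normrM normfV (ger0_norm (_ : (0 : R) <= 10)) // ler_pdivrMr //.
have := ler_normD (x%:~R : R) (decimal l); lra.
Qed.

Lemma decimal_eq0 (B : int) l : B < 9 -> (forall x, x \in l -> `|x| <= B) ->
  decimal l = 0 -> l = nseq (size l) 0.
Proof.
move=> B9; elim: l => [|x l IH] lB //= dec0.
have B0 : 0 <= B by apply: le_trans (lB x (mem_head _ _)).
have lB' z : z \in l -> `|z| <= B by move=> zl; apply: lB; rewrite in_cons zl orbT.
have dB := @decimal_norm_le B l B0 lB'.
have x_opp : (x%:~R : R) = - decimal l by move: dec0; lra.
have B8 : (B%:~R : R) <= 8 by rewrite -[8 : R]/((8 : int)%:~R) ler_int; lia.
have x_eq0 : x = 0.
  have : `|x%:~R : R| < 1 by rewrite x_opp normrN; lra.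
  by rewrite -intr_norm -[1 : R]/((1 : int)%:~R) ltr_int; lia.
have dec0' : decimal l = 0 by move: x_opp; rewrite x_eq0; lra.
by rewrite x_eq0 {1}(IH lB' dec0').
Qed.
End Decimal.

Lemma int_of_odd_mul_double (q : rat) (n : nat) : odd n ->
  n%:R * q \is a Num.int -> 2 * q \is a Num.int -> q \is a Num.int.
Proof.
move=> n_odd nq dq; have -> : q = n%:R * q - n./2%:R * (2 * q).
  have hn : n = (n./2 * 2 + 1)%N by rewrite -[n in LHS]odd_double_half n_odd addnC muln2.
  by rewrite [in n%:R]hn natrD natrM; ring.
by rewrite rpredB // rpredM // rpred_nat.
Qed.

Definition coeffs (v : 'rV[int]_rk) (k : nat) : int := v 0 (inord k).

Lemma coeffsE (v : 'rV[int]_rk) (i : 'I_rk) : v 0 i = coeffs v i.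
Proof. by rewrite /coeffs inord_val. Qed.

Lemma sum_rk {V : nmodType} (F : nat -> V) :
  \sum_(i < rk) F i = foldr (fun i acc => F i + acc) 0 (iota 0 rk).
Proof. by rewrite -(big_mkord xpredT F) /index_iota /= !big_cons big_nil. Qed.

Definition e8_block (c d : nat -> int) (o : nat) : int :=
  2 * c o * d o + 2 * c (o+1)%N * d (o+1)%N + 2 * c (o+2)%N * d (o+2)%N +
  2 * c (o+3)%N * d (o+3)%N + 2 * c (o+4)%N * d (o+4)%N + 2 * c (o+5)%N * d (o+5)%N +
  2 * c (o+6)%N * d (o+6)%N + 2 * c (o+7)%N * d (o+7)%N
  - (c o * d (o+2)%N + c (o+2)%N * d o)
  - (c (o+2)%N * d (o+3)%N + c (o+3)%N * d (o+2)%N)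
  - (c (o+3)%N * d (o+4)%N + c (o+4)%N * d (o+3)%N)
  - (c (o+4)%N * d (o+5)%N + c (o+5)%N * d (o+4)%N)
  - (c (o+5)%N * d (o+6)%N + c (o+6)%N * d (o+5)%N)
  - (c (o+6)%N * d (o+7)%N + c (o+7)%N * d (o+6)%N)
  - (c (o+1)%N * d (o+3)%N + c (o+3)%N * d (o+1)%N).

Definition formL (c d : nat -> int) : int :=
  -2 * c 0%N * d 0%N
  + (2 * c 1%N * d 1%N - c 1%N * d 2%N - c 2%N * d 1%N + 2 * c 2%N * d 2%N)
  + e8_block c d 3 + e8_block c d 11.

Lemma bL_formL (v w : 'rV[int]_rk) : bL v w = formL (coeffs v) (coeffs w).
Proof.
rewrite /bL mxE (eq_bigr (fun j : 'I_rk =>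
  (\sum_(i < rk) coeffs v i * gramL_entry i j) * coeffs w j)); last first.
  move=> j _; rewrite !mxE coeffsE; congr (_ * _).
  by apply: eq_bigr => i _; rewrite !mxE coeffsE.
rewrite (sum_rk (fun j => (\sum_(i < rk) coeffs v i * gramL_entry i j) * coeffs w j)) /=.
rewrite !(sum_rk (fun i => coeffs v i * gramL_entry i _)) /=.
rewrite /gramL_entry /e8 /e8_edge /formL /e8_block /=.
ring.
Qed.

Lemma formL_ext (c c' d d' : nat -> int) :
  (forall k, (k < rk)%N -> c k = c' k) -> (forall k, (k < rk)%N -> d k = d' k) ->
  formL c d = formL c' d'.
Proof. by move=> Hc Hd; rewrite /formL /e8_block /= !Hc // !Hd. Qed.

(* Matrices given by entry functions on [nat]: identities between concrete matrices
   then reduce, through [fmxM] and [fmx_eq], to a boolean computation. *)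
Definition fmx (m n : nat) (f : nat -> nat -> int) : 'M[int]_(m, n) :=
  \matrix_(i, j) f i j.

Definition fmul (p : nat) (f g : nat -> nat -> int) (i j : nat) : int :=
  foldr (fun l acc => f i l * g l j + acc) 0 (iota 0 p).

Lemma fmxM m p n f g : fmx m p f *m fmx p n g = fmx m n (fmul p f g).
Proof.
apply/matrixP => i j; rewrite !mxE; under eq_bigr do rewrite !mxE.
rewrite /fmul -(big_mkord xpredT (fun l => f i l * g l j)).
rewrite /index_iota subn0; elim: (iota 0 p) => [|l s IH]; first by rewrite big_nil.
by rewrite big_cons IH.
Qed.

Lemma mem_iota_ord {n} (i : 'I_n) : (i : nat) \in iota 0 n.
Proof. by rewrite mem_iota ltn_ord. Qed.

Lemma fmx_eq m n f g :
  all (fun i => all (fun j => f i j == g i j) (iota 0 n)) (iota 0 m) ->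
  fmx m n f = fmx m n g.
Proof.
move=> /allP H; apply/matrixP => i j; rewrite !mxE.
have /allP /(_ j) := H i (mem_iota_ord i).
by move=> /(_ (mem_iota_ord j)) /eqP.
Qed.

Lemma trmx_fmx m n f : (fmx m n f)^T = fmx n m (fun i j => f j i).
Proof. by apply/matrixP => i j; rewrite !mxE. Qed.

Definition mkv (l : seq int) : 'rV[int]_rk := fmx 1 rk (fun _ j => nth 0 l j).

Lemma coeffs_mkv l k : (k < rk)%N -> coeffs (mkv l) k = nth 0 l k.
Proof. by move=> hk; rewrite /coeffs mxE inordK. Qed.

Definition pairing (l : seq int) (c : nat -> int) : int := formL c (nth 0 l).

Lemma bL_mkv v l : bL v (mkv l) = pairing l (coeffs v).
Proof. by rewrite bL_formL; apply: formL_ext => // k hk; rewrite coeffs_mkv. Qed.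

Lemma bL_mkv_mkv l l' : bL (mkv l) (mkv l') = formL (nth 0 l) (nth 0 l').
Proof. by rewrite bL_mkv; apply: formL_ext => // k hk; rewrite coeffs_mkv. Qed.

Lemma gramL_fmx : gramL = fmx rk rk gramL_entry.
Proof. by []. Qed.

Lemma gramL_sym : gramL^T = gramL.
Proof. by rewrite gramL_fmx trmx_fmx; apply: fmx_eq; vm_compute. Qed.

Section InvolutiveAutomorphism.
Context {h : 'M[int]_rk}.
Hypothesis h_iso : h *m gramL *m h^T = gramL.
Hypothesis hK : h *m h = 1%:M.

Lemma isAutL_involution : isAutL h.
Proof. by split; [exact: (mulmx1_unit hK).1 | exact: h_iso]. Qed.

Lemma bL_act (v w : 'rV[int]_rk) : bL (v *m h) (w *m h) = bL v w.
Proof. by rewrite /bL trmx_mul !mulmxA -(mulmxA _ h) -(mulmxA _ _ h^T) h_iso. Qed.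

Lemma mulmx_hK (v : 'rV[int]_rk) : v *m h *m h = v.
Proof. by rewrite -mulmxA hK mulmx1. Qed.

Lemma Vroots_act (v : 'rV[int]_rk) : Vroots v -> Vroots (v *m h).
Proof.
have V_k_act k : V_k k v -> V_k k (v *m h).
  move=> [vv vw]; split=> [|w]; first by rewrite bL_act.
  by rewrite -[w in bL _ w]mulmx_hK bL_act.
by case=> ?; [left | right]; exact: V_k_act.
Qed.

End InvolutiveAutomorphism.

Lemma oppmx1_iso : (- 1%:M : 'M[int]_rk) *m gramL *m (- 1%:M)^T = gramL.
Proof. by rewrite linearN /= trmx1 mulNmx mulmxN mul1mx mulmx1 opprK. Qed.

Lemma oppmx1K : (- 1%:M : 'M[int]_rk) *m (- 1%:M) = 1%:M.
Proof. by rewrite mulNmx mulmxN opprK mulmx1. Qed.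

Section RealForm.
Variable R : realType.
Local Notation V := 'rV[R]_rk.
Local Notation iv := (intvR R).

Lemma bR_int v w : bR (iv v) (iv w) = (bL v w)%:~R.
Proof. by rewrite /bR /intvR /gramR map_trmx -!map_mxM mxE. Qed.

Lemma bR_sym (x y : V) : bR x y = bR y x.
Proof.
rewrite /bR -[x *m _ *m _]trmxK [LHS]mxE !trmx_mul trmxK mulmxA.
by rewrite /gramR map_trmx gramL_sym.
Qed.

Lemma bRD (x y z : V) : bR x (y + z) = bR x y + bR x z.
Proof. by rewrite /bR linearD /= mulmxDr mxE. Qed.

Lemma bRDl (x y z : V) : bR (x + y) z = bR x z + bR y z.
Proof. by rewrite bR_sym bRD !(bR_sym _ z). Qed.

Lemma bRZ (x : V) (a : R) (y : V) : bR x (a *: y) = a * bR x y.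
Proof. by rewrite /bR linearZ /= -scalemxAr mxE. Qed.

Lemma bR0 (x : V) : bR x 0 = 0.
Proof. by rewrite -(scale0r 0) bRZ mul0r. Qed.

Lemma actR_continuous (g : 'M[int]_rk) : continuous (actR g : V -> V).
Proof.
have -> : actR g = (fun x : V => \sum_(i < rk) x 0 i *: row i (map_mx intr g)).
  by apply/funext => x; rewrite /actR mulmx_sum_row.
apply: continuous_big => [|i _ x]; first exact: add_continuous.
by apply: continuousZr_tmp; exact: (@coord_continuous R 1 rk 0 i).
Qed.

Lemma actR_opp (x : V) : actR (- 1%:M) x = - x.
Proof. by rewrite /actR map_mxN map_mx1 mulmxN mulmx1. Qed.

End RealForm.

Section RealInvolutiveAutomorphism.
Context {R : realType} {h : 'M[int]_rk}.
Local Notation V := 'rV[R]_rk.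
Hypothesis h_iso : h *m gramL *m h^T = gramL.
Hypothesis hK : h *m h = 1%:M.
Local Notation hR := (map_mx (fun z : int => z%:~R : R) h).

Lemma bR_act (x y : V) : bR (actR h x) (actR h y) = bR x y.
Proof.
have hR_iso : hR *m gramR R *m hR^T = gramR R by rewrite /gramR map_trmx -!map_mxM h_iso.
by rewrite /bR /actR trmx_mul !mulmxA -(mulmxA _ hR) -(mulmxA _ _ hR^T) hR_iso.
Qed.

Lemma actRK : involutive (actR h : V -> V).
Proof. by move=> x; rewrite /actR -mulmxA -map_mxM hK map_mx1 mulmx1. Qed.

Lemma actR_int (v : 'rV[int]_rk) : actR h (intvR R v) = intvR R (v *m h).
Proof. by rewrite /actR /intvR map_mxM. Qed.

Lemma negcone_act (x : V) : negcone (actR h x) <-> negcone x.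
Proof. by rewrite /negcone /= bR_act. Qed.

Lemma mirrors_act (x : V) : mirrors (actR h x) -> mirrors x.
Proof.
move=> [v [v_root v_perp]]; exists (v *m h); split; first exact: Vroots_act.
by rewrite -actR_int -[x in bR _ x]actRK bR_act.
Qed.

Lemma open_cells_act (x : V) : open_cells_lift x -> open_cells_lift (actR h x).
Proof.
move=> [x_neg x_mirror]; split; first by apply/negcone_act.
by move=> /mirrors_act.
Qed.

Lemma cell_lift_act (x : V) : actR h @` cell_lift x = cell_lift (actR h x).
Proof.
have cont := @actR_continuous R h.
rewrite /cell_lift.
rewrite -(image_connected_component_involutive _ cont actRK) //; last exact: open_cells_act.
rewrite -(image_closure_involutive _ cont actRK).
apply/seteqP; split => [_ [z [cz nz] <-]|_ [[z cz <-] nz]].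
  by split; [exists z | apply/negcone_act].
by exists z => //; split => //; apply/negcone_act.
Qed.

End RealInvolutiveAutomorphism.

Lemma cell_lift_opp (R : realType) (x : 'rV[R]_rk) :
  [set - z | z in cell_lift x] = cell_lift (- x).
Proof.
have opp : actR (- 1%:M) = -%R :> ('rV[R]_rk -> 'rV[R]_rk).
  by apply/funext => z; exact: actR_opp.
by rewrite -opp (@cell_lift_act R _ oppmx1_iso oppmx1K).
Qed.

Lemma cell_full_lift (R : realType) (x : 'rV[R]_rk) :
  cell_full x = cell_lift x `|` cell_lift (- x).
Proof. by rewrite /cell_full cell_lift_opp. Qed.

Definition yl : seq int := [:: 45; 50; 24; 8; 12; 16; 24; 20; 16; 12; -2; -4; -6; -8; -12; -10; -8; -12; 0].
Definition s1l : seq int := [:: 0; 0; 0; 1; 0; 0; 0; 0; 0; 0; 0; 1; 0; 0; 0; 0; 0; 0; 0].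
Definition s2l : seq int := [:: 0; 0; 0; 0; 1; 0; 0; 0; 0; 0; 0; 0; 1; 0; 0; 0; 0; 0; 0].
Definition s3l : seq int := [:: 0; 0; 0; 0; 0; 1; 0; 0; 0; 0; 0; 0; 0; 1; 0; 0; 0; 0; 0].
Definition s4l : seq int := [:: 0; 0; 0; 0; 0; 0; 1; 0; 0; 0; 0; 0; 0; 0; 1; 0; 0; 0; 0].
Definition s5l : seq int := [:: 0; 0; 0; 0; 0; 0; 0; 1; 0; 0; 0; 0; 0; 0; 0; 1; 0; 0; 0].
Definition s6l : seq int := [:: 9; 10; 5; 2; 3; 4; 6; 5; 5; 3; 0; -2; -3; -4; -6; -5; -3; -3; 0].
Definition d1l : seq int := [:: 0; 0; 0; 1; 0; 0; 0; 0; 0; 0; 0; -1; 0; 0; 0; 0; 0; 0; 0].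
Definition d2l : seq int := [:: 0; 0; 0; 0; 1; 0; 0; 0; 0; 0; 0; 0; -1; 0; 0; 0; 0; 0; 0].
Definition d3l : seq int := [:: 0; 0; 0; 0; 0; 1; 0; 0; 0; 0; 0; 0; 0; -1; 0; 0; 0; 0; 0].
Definition d4l : seq int := [:: 0; 0; 0; 0; 0; 0; 1; 0; 0; 0; 0; 0; 0; 0; -1; 0; 0; 0; 0].
Definition d5l : seq int := [:: 0; 0; 0; 0; 0; 0; 0; 1; 0; 0; 0; 0; 0; 0; 0; -1; 0; 0; 0].
Definition d6l : seq int := [:: -9; -10; -5; -2; -3; -4; -6; -5; -3; -3; 0; 2; 3; 4; 6; 5; 3; 3; 0].
Definition t1l : seq int := [:: 16; 18; 9; 2; 3; 4; 6; 5; 4; 3; -1; -2; -3; -4; -6; -5; -4; -5; -1].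
Definition t2l : seq int := [:: 8; 9; 4; 0; 0; 0; 0; 0; 0; 0; -1; 0; 0; 0; 0; 0; 0; -1; 1].
Definition t3l : seq int := [:: -9; -10; -5; 0; 0; 0; 0; 0; 0; 0; 2; 2; 3; 4; 6; 5; 4; 4; 1].
Definition t4l : seq int := [:: 1; 1; 1; 0; 0; 0; 0; 0; 0; 0; -1; 0; 0; 0; 0; 0; 0; 0; 0].
Definition t5l : seq int := [:: 9; 10; 4; 2; 3; 4; 6; 5; 4; 3; 0; -2; -3; -4; -6; -5; -4; -4; -1].
Definition t6l : seq int := [:: 1; 1; 1; 0; 0; 0; 0; 0; 0; 0; 0; 0; 0; 0; 0; 0; 0; -1; 0].

Definition Y := pairing yl.
Definition S1 := pairing s1l. Definition S2 := pairing s2l. Definition S3 := pairing s3l.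
Definition S4 := pairing s4l. Definition S5 := pairing s5l. Definition S6 := pairing s6l.
Definition D1 := pairing d1l. Definition D2 := pairing d2l. Definition D3 := pairing d3l.
Definition D4 := pairing d4l. Definition D5 := pairing d5l. Definition D6 := pairing d6l.
Definition T1 := pairing t1l. Definition T2 := pairing t2l. Definition T3 := pairing t3l.
Definition T4 := pairing t4l. Definition T5 := pairing t5l. Definition T6 := pairing t6l.

Definition wls : seq (seq int) :=
  [:: s1l; s2l; s3l; s4l; s5l; s6l; t1l; t2l; t3l; t4l; t5l; t6l].

Definition wpairings (c : nat -> int) : seq int := [seq pairing l c | l <- wls].

(* [e6_dual] is three times the inverse of the Cartan form of E6. *)
Definition e6_dual (z1 z2 z3 z4 z5 z6 : int) : int :=
  4*z1*z1 + 6*z2*z2 + 10*z3*z3 + 18*z4*z4 + 10*z5*z5 + 4*z6*z6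
  + 2*(3*z1*z2 + 5*z1*z3 + 6*z1*z4 + 4*z1*z5 + 2*z1*z6
       + 6*z2*z3 + 9*z2*z4 + 6*z2*z5 + 3*z2*z6
       + 12*z3*z4 + 8*z3*z5 + 4*z3*z6
       + 12*z4*z5 + 6*z4*z6 + 5*z5*z6).

Definition e6_cartan (z1 z2 z3 z4 z5 z6 : int) : int :=
  2 * (z1 * z1 + z2 * z2 + z3 * z3 + z4 * z4 + z5 * z5 + z6 * z6)
  - 2 * (z1 * z3 + z3 * z4 + z4 * z5 + z5 * z6 + z2 * z4).

(* The s_k and the d_k have Gram matrix twice the Cartan matrix of E6, the t_k have the
   Cartan matrix, and y, the s_k, the d_k and the t_k are pairwise orthogonal and span
   L (x) Q: this is v^2 expressed through the pairings of v with these vectors. *)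
Lemma formL_decomp c : 6 * formL c c =
  -3 * Y c ^+ 2 + e6_dual (S1 c) (S2 c) (S3 c) (S4 c) (S5 c) (S6 c)
  + e6_dual (D1 c) (D2 c) (D3 c) (D4 c) (D5 c) (D6 c)
  + 2 * e6_dual (T1 c) (T2 c) (T3 c) (T4 c) (T5 c) (T6 c).
Proof.
rewrite /Y /S1 /S2 /S3 /S4 /S5 /S6 /D1 /D2 /D3 /D4 /D5 /D6 /T1 /T2 /T3 /T4 /T5 /T6.
rewrite /pairing /e6_dual /formL /e8_block /=.
ring.
Qed.

Definition dcoord1 (c : nat -> int) : int := (-2) * c 1%N + c 3%N + 6 * c 8%N.
Definition dcoord2 (c : nat -> int) : int := (-3) * c 1%N + c 4%N + 9 * c 8%N.
Definition dcoord3 (c : nat -> int) : int := (-4) * c 1%N + c 5%N + 12 * c 8%N.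
Definition dcoord4 (c : nat -> int) : int := (-6) * c 1%N + c 6%N + 18 * c 8%N.
Definition dcoord5 (c : nat -> int) : int := (-5) * c 1%N + c 7%N + 15 * c 8%N.
Definition dcoord6 (c : nat -> int) : int := (-1) * c 1%N + 3 * c 8%N.

(* When v is orthogonal to y, the s_k and the t_k, the [dcoord_k] are its integral
   coordinates in the basis d_k, so that v^2 = 2 e6_cartan (dcoord); [pairing_terms] is
   [18 v^2 - 36 e6_cartan (dcoord)] written in the pairings of v with y, s_k and t_k.
   Large coefficients are written [a * 100 + b] since nat numerals are unary. *)
Definition pairing_terms (c : nat -> int) : int :=
  (Y c) * ((11 * 100 + 43) * (Y c) + (-15 * 100) * (S1 c) + (-(22 * 100 + 50)) * (S2 c) + (-30 * 100) * (S3 c) + (-45 * 100) * (S4 c) + (-(37 * 100 + 50)) * (S5 c) + (-(29 * 100 + 10)) * (S6 c) + (-(21 * 100 + 84)) * (T1 c) + (-108) * (T2 c) + (-(73 * 100 + 56)) * (T3 c) + (-(60 * 100 + 48)) * (T4 c) + (-(52 * 100 + 80)) * (T5 c) + (-(23 * 100 + 16)) * (T6 c) + 360 * (dcoord5 c) + (-(5 * 100 + 4)) * (dcoord6 c))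
  + (S1 c) * ((-15 * 100) * (Y c) + (22 * 100 + 16) * (S1 c) + (33 * 100 + 6) * (S2 c) + (44 * 100 + 14) * (S3 c) + (66 * 100 + 12) * (S4 c) + (55 * 100 + 4) * (S5 c) + (42 * 100 + 76) * (S6 c) + (29 * 100 + 72) * (T1 c) + (-180) * (T2 c) + (105 * 100 + 40) * (T3 c) + (83 * 100 + 88) * (T4 c) + (73 * 100 + 88) * (T5 c) + (32 * 100 + 8) * (T6 c) + (-36) * (dcoord1 c) + (-480) * (dcoord5 c) + (5 * 100 + 28) * (dcoord6 c))
  + (S2 c) * ((-(22 * 100 + 50)) * (Y c) + (33 * 100 + 6) * (S1 c) + (49 * 100 + 68) * (S2 c) + (66 * 100 + 12) * (S3 c) + (99 * 100 + 18) * (S4 c) + (82 * 100 + 56) * (S5 c) + (64 * 100 + 14) * (S6 c) + (44 * 100 + 58) * (T1 c) + (-270) * (T2 c) + (158 * 100 + 10) * (T3 c) + (125 * 100 + 82) * (T4 c) + (110 * 100 + 82) * (T5 c) + (48 * 100 + 12) * (T6 c) + (-36) * (dcoord2 c) + (-(7 * 100 + 20)) * (dcoord5 c) + (7 * 100 + 92) * (dcoord6 c))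
  + (S3 c) * ((-30 * 100) * (Y c) + (44 * 100 + 14) * (S1 c) + (66 * 100 + 12) * (S2 c) + (88 * 100 + 28) * (S3 c) + (132 * 100 + 24) * (S4 c) + (110 * 100 + 8) * (S5 c) + (85 * 100 + 52) * (S6 c) + (59 * 100 + 44) * (T1 c) + (-360) * (T2 c) + (210 * 100 + 80) * (T3 c) + (167 * 100 + 76) * (T4 c) + (147 * 100 + 76) * (T5 c) + (64 * 100 + 16) * (T6 c) + (-36) * (dcoord3 c) + (-(9 * 100 + 60)) * (dcoord5 c) + (10 * 100 + 56) * (dcoord6 c))
  + (S4 c) * ((-45 * 100) * (Y c) + (66 * 100 + 12) * (S1 c) + (99 * 100 + 18) * (S2 c) + (132 * 100 + 24) * (S3 c) + (198 * 100 + 36) * (S4 c) + (165 * 100 + 12) * (S5 c) + (128 * 100 + 28) * (S6 c) + (89 * 100 + 16) * (T1 c) + (-(5 * 100 + 40)) * (T2 c) + (316 * 100 + 20) * (T3 c) + (251 * 100 + 64) * (T4 c) + (221 * 100 + 64) * (T5 c) + (96 * 100 + 24) * (T6 c) + (-36) * (dcoord4 c) + (-(14 * 100 + 40)) * (dcoord5 c) + (15 * 100 + 84) * (dcoord6 c))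
  + (S5 c) * ((-(37 * 100 + 50)) * (Y c) + (55 * 100 + 4) * (S1 c) + (82 * 100 + 56) * (S2 c) + (110 * 100 + 8) * (S3 c) + (165 * 100 + 12) * (S4 c) + (137 * 100 + 60) * (S5 c) + (106 * 100 + 90) * (S6 c) + (74 * 100 + 30) * (T1 c) + (-450) * (T2 c) + (263 * 100 + 50) * (T3 c) + (209 * 100 + 70) * (T4 c) + (184 * 100 + 70) * (T5 c) + (80 * 100 + 20) * (T6 c) + (-(12 * 100 + 36)) * (dcoord5 c) + (13 * 100 + 20) * (dcoord6 c))
  + (S6 c) * ((-(29 * 100 + 10)) * (Y c) + (42 * 100 + 76) * (S1 c) + (64 * 100 + 14) * (S2 c) + (85 * 100 + 52) * (S3 c) + (128 * 100 + 28) * (S4 c) + (106 * 100 + 90) * (S5 c) + (83 * 100 + 12) * (S6 c) + (57 * 100 + 70) * (T1 c) + (-360) * (T2 c) + (204 * 100 + 80) * (T3 c) + (162 * 100 + 90) * (T4 c) + (143 * 100 + 50) * (T5 c) + (62 * 100 + 30) * (T6 c) + (-(9 * 100 + 60)) * (dcoord5 c) + (10 * 100 + 20) * (dcoord6 c))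
  + (T1 c) * ((-(21 * 100 + 84)) * (Y c) + (29 * 100 + 72) * (S1 c) + (44 * 100 + 58) * (S2 c) + (59 * 100 + 44) * (S3 c) + (89 * 100 + 16) * (S4 c) + (74 * 100 + 30) * (S5 c) + (57 * 100 + 70) * (S6 c) + (42 * 100 + 32) * (T1 c) + 54 * (T2 c) + (144 * 100 + 82) * (T3 c) + (117 * 100 + 72) * (T4 c) + (103 * 100 + 4) * (T5 c) + (45 * 100 + 4) * (T6 c) + (-(6 * 100 + 96)) * (dcoord5 c) + (8 * 100 + 88) * (dcoord6 c))
  + (T2 c) * ((-108) * (Y c) + (-180) * (S1 c) + (-270) * (S2 c) + (-360) * (S3 c) + (-(5 * 100 + 40)) * (S4 c) + (-450) * (S5 c) + (-360) * (S6 c) + 54 * (T1 c) + 468 * (T2 c) + (-(5 * 100 + 40)) * (T3 c) + (-54) * (T4 c) + (-144) * (T5 c) + (-18) * (T6 c) + 216 * (dcoord6 c))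
  + (T3 c) * ((-(73 * 100 + 56)) * (Y c) + (105 * 100 + 40) * (S1 c) + (158 * 100 + 10) * (S2 c) + (210 * 100 + 80) * (S3 c) + (316 * 100 + 20) * (S4 c) + (263 * 100 + 50) * (S5 c) + (204 * 100 + 80) * (S6 c) + (144 * 100 + 82) * (T1 c) + (-(5 * 100 + 40)) * (T2 c) + ((5 * 100 + 8) * 100 + 28) * (T3 c) + (407 * 100 + 16) * (T4 c) + (357 * 100 + 88) * (T5 c) + (155 * 100 + 72) * (T6 c) + (-24 * 100) * (dcoord5 c) + (27 * 100 + 12) * (dcoord6 c))
  + (T4 c) * ((-(60 * 100 + 48)) * (Y c) + (83 * 100 + 88) * (S1 c) + (125 * 100 + 82) * (S2 c) + (167 * 100 + 76) * (S3 c) + (251 * 100 + 64) * (S4 c) + (209 * 100 + 70) * (S5 c) + (162 * 100 + 90) * (S6 c) + (117 * 100 + 72) * (T1 c) + (-54) * (T2 c) + (407 * 100 + 16) * (T3 c) + (329 * 100 + 40) * (T4 c) + (288 * 100 + 72) * (T5 c) + (126 * 100) * (T6 c) + (-(19 * 100 + 44)) * (dcoord5 c) + (23 * 100 + 76) * (dcoord6 c))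
  + (T5 c) * ((-(52 * 100 + 80)) * (Y c) + (73 * 100 + 88) * (S1 c) + (110 * 100 + 82) * (S2 c) + (147 * 100 + 76) * (S3 c) + (221 * 100 + 64) * (S4 c) + (184 * 100 + 70) * (S5 c) + (143 * 100 + 50) * (S6 c) + (103 * 100 + 4) * (T1 c) + (-144) * (T2 c) + (357 * 100 + 88) * (T3 c) + (288 * 100 + 72) * (T4 c) + (253 * 100 + 40) * (T5 c) + (110 * 100 + 50) * (T6 c) + (-(17 * 100 + 4)) * (dcoord5 c) + (20 * 100 + 40) * (dcoord6 c))
  + (T6 c) * ((-(23 * 100 + 16)) * (Y c) + (32 * 100 + 8) * (S1 c) + (48 * 100 + 12) * (S2 c) + (64 * 100 + 16) * (S3 c) + (96 * 100 + 24) * (S4 c) + (80 * 100 + 20) * (S5 c) + (62 * 100 + 30) * (S6 c) + (45 * 100 + 4) * (T1 c) + (-18) * (T2 c) + (155 * 100 + 72) * (T3 c) + (126 * 100) * (T4 c) + (110 * 100 + 50) * (T5 c) + (48 * 100 + 32) * (T6 c) + (-(7 * 100 + 44)) * (dcoord5 c) + (9 * 100 + 12) * (dcoord6 c)).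

Lemma formL_decomp_diff c : 18 * formL c c =
  36 * e6_cartan (dcoord1 c) (dcoord2 c) (dcoord3 c) (dcoord4 c) (dcoord5 c) (dcoord6 c)
  + pairing_terms c.
Proof.
rewrite /e6_cartan /pairing_terms /dcoord1 /dcoord2 /dcoord3 /dcoord4 /dcoord5 /dcoord6.
rewrite /Y /S1 /S2 /S3 /S4 /S5 /S6 /T1 /T2 /T3 /T4 /T5 /T6 /pairing /formL /e8_block /=.
ring.
Qed.

Lemma e6_dual_ge0 z1 z2 z3 z4 z5 z6 : 0 <= e6_dual z1 z2 z3 z4 z5 z6.
Proof.
have sos : 20 * e6_dual z1 z2 z3 z4 z5 z6 =
    5 * (4*z1 + 3*z2 + 5*z3 + 6*z4 + 4*z5 + 2*z6) ^+ 2
  + 3 * (5*z2 + 3*z3 + 6*z4 + 4*z5 + 2*z6) ^+ 2 + 3 * (4*z3 + 3*z4 + 2*z5 + z6) ^+ 2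
  + 5 * (3*z4 + 2*z5 + z6) ^+ 2 + 10 * (2*z5 + z6) ^+ 2 + 30 * z6 ^+ 2.
  by rewrite /e6_dual; ring.
have : 0 <= 20 * e6_dual z1 z2 z3 z4 z5 z6 by rewrite sos !addr_ge0 // mulr_ge0 // sqr_ge0.
by rewrite pmulr_rge0.
Qed.

(* Each case evaluates [e6_dual] at [2 z - z_i r_i] for a suitable integral vector [r_i],
   which gives [4 e6_dual z - 6 z_i^2 >= 0]. *)
Lemma e6_dual_coord_le z1 z2 z3 z4 z5 z6 z : z \in [:: z1; z2; z3; z4; z5; z6] ->
  3 * (z * z) <= 2 * e6_dual z1 z2 z3 z4 z5 z6.
Proof.
set q := e6_dual _ _ _ _ _ _.
have bound w zi : 0 <= w -> w = 4 * q - 6 * (zi * zi) -> 3 * (zi * zi) <= 2 * q.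
  by move=> w0 ew; lia.
rewrite !inE => /or4P[|||/or3P[||]] /eqP ->; [
  apply: (bound _ _ (e6_dual_ge0 0 (2*z2) (2*z3 + z1) (2*z4) (2*z5) (2*z6))) |
  apply: (bound _ _ (e6_dual_ge0 (2*z1) 0 (2*z3) (2*z4 + z2) (2*z5) (2*z6))) |
  apply: (bound _ _ (e6_dual_ge0 (2*z1 + z3) (2*z2) 0 (2*z4 + z3) (2*z5) (2*z6))) |
  apply: (bound _ _ (e6_dual_ge0 (2*z1) (2*z2 + z4) (2*z3 + z4) 0 (2*z5 + z4) (2*z6))) |
  apply: (bound _ _ (e6_dual_ge0 (2*z1) (2*z2) (2*z3) (2*z4 + z5) 0 (2*z6 + z5))) |
  apply: (bound _ _ (e6_dual_ge0 (2*z1) (2*z2) (2*z3) (2*z4) (2*z5 + z6) 0)) ];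
  by rewrite /q /e6_dual; ring.
Qed.

Lemma e6_cartan_even z1 z2 z3 z4 z5 z6 : exists k, e6_cartan z1 z2 z3 z4 z5 z6 = 2 * k.
Proof. by eexists; rewrite /e6_cartan -mulrBr. Qed.

Lemma wpairings_sq_le c : formL c c <= 6 ->
  forall w, w \in wpairings c -> w * w <= 24 + 2 * (Y c * Y c).
Proof.
move=> Q6 w w_in; have := formL_decomp c; rewrite expr2.
have := e6_dual_ge0 (D1 c) (D2 c) (D3 c) (D4 c) (D5 c) (D6 c).
have := e6_dual_ge0 (S1 c) (S2 c) (S3 c) (S4 c) (S5 c) (S6 c).
have := e6_dual_ge0 (T1 c) (T2 c) (T3 c) (T4 c) (T5 c) (T6 c).
have coordS := @e6_dual_coord_le (S1 c) (S2 c) (S3 c) (S4 c) (S5 c) (S6 c) w.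
have coordT := @e6_dual_coord_le (T1 c) (T2 c) (T3 c) (T4 c) (T5 c) (T6 c) w.
move: coordS coordT; set qS := e6_dual (S1 c) _ _ _ _ _; set qT := e6_dual (T1 c) _ _ _ _ _.
set qD := e6_dual (D1 c) _ _ _ _ _.
have : w \in [:: S1 c; S2 c; S3 c; S4 c; S5 c; S6 c]
           ++ [:: T1 c; T2 c; T3 c; T4 c; T5 c; T6 c] := w_in.
by rewrite mem_cat => /orP[wS|wT] cS cT; [move: (cS wS) | move: (cT wT)]; lia.
Qed.

Lemma formL_mod4 c : Y c = 0 -> wpairings c = nseq 12 0 -> exists k, formL c c = 4 * k.
Proof.
move=> y0 ws0.
have : [:: S1 c; S2 c; S3 c; S4 c; S5 c; S6 c; T1 c; T2 c; T3 c; T4 c; T5 c; T6 c]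
  = nseq 12 0 := ws0.
case=> s1 s2 s3 s4 s5 s6 t1 t2 t3 t4 t5 t6.
have pt0 : pairing_terms c = 0.
  rewrite /pairing_terms y0 s1 s2 s3 s4 s5 s6 t1 t2 t3 t4 t5 t6.
  ring.
have := formL_decomp_diff c; rewrite pt0 addr0.
have [k ->] :=
  e6_cartan_even (dcoord1 c) (dcoord2 c) (dcoord3 c) (dcoord4 c) (dcoord5 c) (dcoord6 c).
by exists k; lia.
Qed.

Lemma base_point_pairing_neq0 (R : realType) c : formL c c = 2 \/ formL c c = 6 ->
  (Y c)%:~R + decimal R (wpairings c) != 0.
Proof.
move=> Q26; have Q6 : formL c c <= 6 by case: Q26 => ->.
have wB := @wpairings_sq_le c Q6.
apply/eqP => sum0.
have [y0|y0] := eqVneq (Y c) 0.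
  have w4 w : w \in wpairings c -> `|w| <= 4.
    by move=> /wB; rewrite y0 mulr0 addr0 => ?; nia.
  move: sum0; rewrite y0 add0r => /(@decimal_eq0 R 4 _ isT w4) ws0.
  have [k Qk] := @formL_mod4 c y0 ws0.
  by case: Q26; rewrite Qk; lia.
have w6 w : w \in wpairings c -> `|w| <= 6 * `|Y c|.
  move=> /wB wY; rewrite -ler_sqr ?nnegrE ?mulr_ge0 // exprMn !real_normK ?num_real //.
  by rewrite !expr2; nia.
have B0 : 0 <= 6 * `|Y c| by rewrite mulr_ge0.
have := @decimal_norm_le R _ _ B0 w6.
have -> : decimal R (wpairings c) = - (Y c)%:~R by move: sum0; lra.
rewrite normrN intrM -intr_norm.
have : (0 : R) < `|Y c|%:~R by rewrite ltr0z normr_gt0.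
lra.
Qed.

Definition gl : seq (seq int) := [:: [:: -217; -240; -120; -36; -54; -72; -108; -90; -72; -72; 0; 36; 54; 72; 108; 90; 72; 72; 0];
  [:: 180; 199; 100; 30; 45; 60; 90; 75; 60; 60; 0; -30; -45; -60; -90; -75; -60; -60; 0];
  [:: 0; 0; -1; 0; 0; 0; 0; 0; 0; 0; 0; 0; 0; 0; 0; 0; 0; 0; 0];
  [:: 0; 0; 0; 0; 0; 0; 0; 0; 0; 0; 0; -1; 0; 0; 0; 0; 0; 0; 0];
  [:: 0; 0; 0; 0; 0; 0; 0; 0; 0; 0; 0; 0; -1; 0; 0; 0; 0; 0; 0];
  [:: 0; 0; 0; 0; 0; 0; 0; 0; 0; 0; 0; 0; 0; -1; 0; 0; 0; 0; 0];
  [:: 0; 0; 0; 0; 0; 0; 0; 0; 0; 0; 0; 0; 0; 0; -1; 0; 0; 0; 0];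
  [:: 0; 0; 0; 0; 0; 0; 0; 0; 0; 0; 0; 0; 0; 0; 0; -1; 0; 0; 0];
  [:: -9; -10; -5; -2; -3; -4; -6; -5; -4; -3; 0; 2; 3; 4; 6; 5; 3; 3; 0];
  [:: 36; 40; 20; 6; 9; 12; 18; 15; 12; 11; 0; -6; -9; -12; -18; -15; -12; -12; 0];
  [:: -36; -40; -20; -6; -9; -12; -18; -15; -12; -12; -1; 6; 9; 12; 18; 15; 12; 12; 0];
  [:: 0; 0; 0; -1; 0; 0; 0; 0; 0; 0; 0; 0; 0; 0; 0; 0; 0; 0; 0];
  [:: 0; 0; 0; 0; -1; 0; 0; 0; 0; 0; 0; 0; 0; 0; 0; 0; 0; 0; 0];
  [:: 0; 0; 0; 0; 0; -1; 0; 0; 0; 0; 0; 0; 0; 0; 0; 0; 0; 0; 0];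
  [:: 0; 0; 0; 0; 0; 0; -1; 0; 0; 0; 0; 0; 0; 0; 0; 0; 0; 0; 0];
  [:: 0; 0; 0; 0; 0; 0; 0; -1; 0; 0; 0; 0; 0; 0; 0; 0; 0; 0; 0];
  [:: 9; 10; 5; 2; 3; 4; 6; 5; 3; 3; 0; -2; -3; -4; -6; -5; -4; -3; 0];
  [:: -36; -40; -20; -6; -9; -12; -18; -15; -12; -12; 0; 6; 9; 12; 18; 15; 12; 11; 0];
  [:: 36; 40; 20; 6; 9; 12; 18; 15; 12; 12; 0; -6; -9; -12; -18; -15; -12; -12; -1]].

Definition gtab (i j : nat) : int := nth 0 (nth [::] gl i) j.
Definition gM : 'M[int]_rk := fmx rk rk gtab.

Lemma gMK : gM *m gM = 1%:M.
Proof.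
have -> : 1%:M = fmx rk rk (fun i j => (i == j)%:R).
  by apply/matrixP => i j; rewrite !mxE.
by rewrite /gM fmxM; apply: fmx_eq; vm_compute.
Qed.

Lemma gM_iso : gM *m gramL *m gM^T = gramL.
Proof. by rewrite /gM gramL_fmx trmx_fmx !fmxM; apply: fmx_eq; vm_compute. Qed.

Section DecimalVector.
Variable R : realType.
Local Notation V := 'rV[R]_rk.
Local Notation iv := (intvR R).

Definition decimal_vec (l : seq 'rV[int]_rk) : V :=
  foldr (fun w acc => 10^-1 *: (iv w + acc)) 0 l.

Lemma bR_decimal_vec v l : bR (iv v) (decimal_vec l) = decimal R (map (bL v) l).
Proof.
elim: l => [|w l IH] /=; first by rewrite bR0.
by rewrite bRZ bRD IH bR_int mulrC.
Qed.

Lemma actR_decimal_vec (g : 'M[int]_rk) l : (forall w, w \in l -> w *m g = - w) ->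
  actR g (decimal_vec l) = - decimal_vec l.
Proof.
elim: l => [|w l IH] wl /=; first by rewrite /actR mul0mx oppr0.
rewrite /actR -scalemxAl mulmxDl -/(actR g _) -/(actR g _) IH; last first.
  by move=> z zl; apply: wl; rewrite in_cons zl orbT.
by rewrite actR_int wl ?mem_head // /intvR map_mxN -opprD scalerN.
Qed.

Lemma bR_decimal_vec_sq l : (forall w w', w \in l -> w' \in l -> `|bL w w'| <= 4) ->
  `|bR (decimal_vec l) (decimal_vec l)| <= 1 / 20.
Proof.
elim: l => [|w l IH] wl /=; first by rewrite bR0 normr0.
set e := decimal_vec l.
have ww : `|bR (iv w) (iv w)| <= 4.
  by rewrite bR_int -intr_norm -[4 : R]/((4 : int)%:~R) ler_int wl ?mem_head.
have we : `|bR (iv w) e| <= 4 / 9.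
  rewrite bR_decimal_vec -[4 : R]/((4 : int)%:~R).
  apply: decimal_norm_le => // _ /mapP[w' w'l ->].
  by apply: wl; rewrite ?mem_head // in_cons w'l orbT.
have ee : `|bR e e| <= 1 / 20.
  by apply: IH => a b al bl; apply: wl; rewrite in_cons ?al ?bl orbT.
rewrite bRZ (bR_sym _ (10^-1 *: _)) bRZ bRD !bRDl (bR_sym _ e (iv w)).
move: ww we ee; rewrite !ler_norml => /andP[? ?] /andP[? ?] /andP[? ?].
apply/andP; split; lra.
Qed.

End DecimalVector.

Definition ws : seq 'rV[int]_rk := map mkv wls.

Definition negated_by_g (l : seq int) : bool :=
  all (fun j => fmul rk (fun _ k => nth 0 l k) gtab 0 j == - nth 0 l j) (iota 0 rk).

Lemma mkv_negated l : negated_by_g l -> mkv l *m gM = - mkv l.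
Proof.
move=> l_neg; rewrite /mkv /gM fmxM.
have -> : - fmx 1 rk (fun _ j => nth 0 l j) = fmx 1 rk (fun _ j => - nth 0 l j).
  by apply/matrixP => i j; rewrite !mxE.
by apply: fmx_eq; rewrite /= andbT.
Qed.

Lemma y_negated : mkv yl *m gM = - mkv yl.
Proof. by apply: mkv_negated; vm_compute. Qed.

Lemma ws_negated w : w \in ws -> w *m gM = - w.
Proof.
have : all negated_by_g wls by vm_compute.
by move=> /allP ws_neg /mapP[l l_in ->]; exact/mkv_negated/ws_neg.
Qed.

Lemma bL_y_y : bL (mkv yl) (mkv yl) = -2.
Proof. by rewrite bL_mkv_mkv; vm_compute. Qed.

Lemma bL_y_ws w : w \in ws -> bL (mkv yl) w = 0.
Proof.
have : all (fun l => formL (nth 0 yl) (nth 0 l) == 0) wls by vm_compute.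
by move=> /allP y_perp /mapP[l l_in ->]; rewrite bL_mkv_mkv; exact/eqP/y_perp.
Qed.

Lemma bL_ws_ws w w' : w \in ws -> w' \in ws -> `|bL w w'| <= 4.
Proof.
have : all (fun l => all (fun l' => `|formL (nth 0 l) (nth 0 l')| <= 4) wls) wls.
  by vm_compute.
move=> /allP ws_small /mapP[l l_in ->] /mapP[l' l'_in ->]; rewrite bL_mkv_mkv.
exact: (allP (ws_small l l_in)).
Qed.

Section BasePoint.
Variable R : realType.

Definition base_point : 'rV[R]_rk := intvR R (mkv yl) + decimal_vec R ws.

Lemma actR_base_point : actR gM base_point = - base_point.
Proof.
have actR_negated (a : 'rV[int]_rk) (e : 'rV[R]_rk) :
    a *m gM = - a -> actR gM e = - e -> actR gM (intvR R a + e) = - (intvR R a + e).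
  move=> ga ge; rewrite /actR mulmxDl -/(actR gM e) ge -/(actR gM (intvR R a)).
  by rewrite actR_int ga /intvR map_mxN opprD.
exact: (actR_negated _ _ y_negated (@actR_decimal_vec R gM ws ws_negated)).
Qed.

Lemma negcone_base_point : negcone base_point.
Proof.
rewrite /negcone /= /base_point bRDl !bRD bR_int bL_y_y.
rewrite (@bR_sym R (decimal_vec R ws)) bR_decimal_vec.
have -> : map (bL (mkv yl)) ws = nseq 12 0.
  by apply/all_pred1P/allP => _ /mapP[w w_in ->]; rewrite /= bL_y_ws.
have := @bR_decimal_vec_sq R ws bL_ws_ws; rewrite ler_norml => /andP[_ ee].
rewrite /decimal /=; lra.
Qed.

Lemma base_point_not_mirror : ~ mirrors base_point.
Proof.
move=> [v [v_root v_perp]].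
have Qv : formL (coeffs v) (coeffs v) = 2 \/ formL (coeffs v) (coeffs v) = 6.
  by rewrite -bL_formL; case: v_root => [[-> _]|[-> _]]; [left | right].
have := @base_point_pairing_neq0 R _ Qv.
rewrite -v_perp /base_point bRD bR_int bR_decimal_vec bL_mkv.
by rewrite /ws -map_comp (eq_map (bL_mkv v)) eqxx.
Qed.

Lemma open_cells_base_point : open_cells_lift base_point.
Proof. by split; [exact: negcone_base_point | exact: base_point_not_mirror]. Qed.

End BasePoint.

Definition ztl : seq (seq int) := [:: [:: -218; -240; -120; -36; -54; -72; -108; -90; -72; -72; 0; 36; 54; 72; 108; 90; 72; 72; 0];
  [:: 120; 132; 66; 20; 30; 40; 60; 50; 40; 40; 0; -20; -30; -40; -60; -50; -40; -40; 0];
  [:: 60; 66; 32; 10; 15; 20; 30; 25; 20; 20; 0; -10; -15; -20; -30; -25; -20; -20; 0];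
  [:: 18; 20; 10; -4; -5; -7; -10; -8; -6; -2; -4; -4; -5; -7; -10; -8; -6; -6; 0];
  [:: 27; 30; 15; -5; -8; -10; -15; -12; -9; -3; -6; -5; -8; -10; -15; -12; -9; -9; 0];
  [:: 36; 40; 20; -7; -10; -14; -20; -16; -12; -4; -8; -7; -10; -14; -20; -16; -12; -12; 0];
  [:: 54; 60; 30; -10; -15; -20; -30; -24; -18; -6; -12; -10; -15; -20; -30; -24; -18; -18; 0];
  [:: 45; 50; 25; -8; -12; -16; -24; -20; -15; -5; -10; -8; -12; -16; -24; -20; -15; -15; 0];
  [:: 36; 40; 20; -6; -9; -12; -18; -15; -12; -4; -8; -6; -9; -12; -18; -15; -12; -12; 0];
  [:: 36; 40; 20; -2; -3; -4; -6; -5; -4; 0; -6; -6; -9; -12; -18; -15; -12; -12; 0];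
  [:: 0; 0; 0; -4; -6; -8; -12; -10; -8; -6; -4; 0; 0; 0; 0; 0; 0; 0; 0];
  [:: -18; -20; -10; -4; -5; -7; -10; -8; -6; -6; 0; -4; -5; -7; -10; -8; -6; -2; -4];
  [:: -27; -30; -15; -5; -8; -10; -15; -12; -9; -9; 0; -5; -8; -10; -15; -12; -9; -3; -6];
  [:: -36; -40; -20; -7; -10; -14; -20; -16; -12; -12; 0; -7; -10; -14; -20; -16; -12; -4; -8];
  [:: -54; -60; -30; -10; -15; -20; -30; -24; -18; -18; 0; -10; -15; -20; -30; -24; -18; -6; -12];
  [:: -45; -50; -25; -8; -12; -16; -24; -20; -15; -15; 0; -8; -12; -16; -24; -20; -15; -5; -10];
  [:: -36; -40; -20; -6; -9; -12; -18; -15; -12; -12; 0; -6; -9; -12; -18; -15; -12; -4; -8];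
  [:: -36; -40; -20; -6; -9; -12; -18; -15; -12; -12; 0; -2; -3; -4; -6; -5; -4; 0; -6];
  [:: 0; 0; 0; 0; 0; 0; 0; 0; 0; 0; 0; -4; -6; -8; -12; -10; -8; -6; -4]].
Definition ztab (i j : nat) : int := nth 0 (nth [::] ztl i) j.

(* The [j]-th coordinate of [x *m zpre] is [x_0] for [j = 0] and [(x G^T)_j] otherwise. *)
Definition zpre (i j : nat) : int := if j == 0%N then (i == 0%N)%:R else gramL_entry j i.

Lemma gM_sub1_factor : gM - 1%:M = fmx rk rk zpre *m fmx rk rk ztab.
Proof.
have -> : gM - 1%:M = fmx rk rk (fun i j => gtab i j - (i == j)%:R).
  by apply/matrixP => i j; rewrite !mxE.
by rewrite fmxM; apply: fmx_eq; vm_compute.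
Qed.

Lemma sum_ord0 (V : nmodType) (F : 'I_rk -> V) :
  (forall i : 'I_rk, val i != 0%N -> F i = 0) -> \sum_i F i = F ord0.
Proof. by move=> F0; rewrite (bigD1 ord0) //= big1 ?addr0 // => i /F0. Qed.

Lemma integral_mulmx (x : 'rV[rat]_rk) (M : 'M[int]_rk) :
  integral_vec x -> integral_vec (x *m map_mx (fun z : int => z%:~R) M).
Proof. by move=> xZ j; rewrite mxE rpred_sum // => i _; rewrite mxE rpredM ?intr_int. Qed.

Lemma integral_zpre (x : 'rV[rat]_rk) : x 0 0 \is a Num.int -> inLdual x ->
  integral_vec (x *m map_mx (fun z : int => z%:~R) (fmx rk rk zpre)).
Proof.
move=> x00_int xdual j; rewrite mxE; have [j0|jn0] := eqVneq (val j) 0%N.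
  rewrite sum_ord0 => [|i i0]; first by rewrite !mxE /zpre j0 mulr1.
  by rewrite !mxE /zpre j0 (negbTE i0) mulr0.
have := xdual j; rewrite mxE; congr (_ \is a _); apply: eq_bigr => i _.
by rewrite !mxE /zpre (negbTE jn0).
Qed.

Lemma Z3_direct_gM : Z3_direct gM.
Proof.
move=> x xdual [k xk].
have x00_int : x 0 0 \is a Num.int.
  apply: (@int_of_odd_mul_double _ (3 ^ k)); first by rewrite oddX orbT.
    by have := xk 0; rewrite mxE.
  have := xdual 0; rewrite mxE sum_ord0 => [|i i0]; last first.
    by rewrite !mxE /gramL_entry /= (negbTE i0) mulr0.
  rewrite !mxE /gramL_entry /= => dual0.
  by rewrite -rpredN (_ : - (2 * x 0 0) = x 0 ord0 * (-2)%:~R) //; ring.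
have -> : x *m map_mx (fun z : int => z%:~R) gM - x =
          x *m map_mx (fun z : int => z%:~R) (gM - 1%:M).
  by rewrite map_mxB map_mx1 mulmxBr mulmx1.
rewrite gM_sub1_factor map_mxM mulmxA.
exact/integral_mulmx/integral_zpre.
Qed.

Theorem corollary7p6p2 (R : realType) :
  exists (x0 : 'rV[R]_rk) (g : 'M[int]_rk),
    open_cells_lift x0 /\ isAutL g /\
    actR g @` cell_full x0 = cell_full x0 /\
    actR g @` cell_lift x0 = [set - x | x in cell_lift x0] /\
    Z3_direct g.
Proof.
exists (base_point R), gM.
have g_cell : actR gM @` cell_lift (base_point R) = cell_lift (- base_point R).
  by rewrite (cell_lift_act gM_iso gMK) actR_base_point.
have g_cell_opp : actR gM @` cell_lift (- base_point R) = cell_lift (base_point R).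
  by rewrite (cell_lift_act gM_iso gMK) /actR mulNmx -/(actR _ _) actR_base_point opprK.
split; first exact: open_cells_base_point.
split; first exact: isAutL_involution gM_iso gMK.
split; first by rewrite cell_full_lift image_setU g_cell g_cell_opp setUC.
by split; [rewrite g_cell cell_lift_opp | exact: Z3_direct_gM].
Qed.
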